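(* Fix $\kappa\in[0,1]$ and consider the optimization problem (SMOP2) $$\min_{(\mathbf a,\mathbf s)}\ f_\kappa(\bar{\mathbf a},\mathbf s):=\kappa\,\|\bar{\mathbf a}-\bar\zeta\|_2^2+(1-\kappa)\,\|\mathbf s\|_2^2$$ subject to $\mathbf z_i-\mathbf a_i=0$ and $\mathbf z_i\in\mathbb D_i$ for all $i\in[1:\mathcal I]$, and $(\bar{\mathbf a},\mathbf s)\in\mathbb S$, where $\bar{\mathbf a}=\frac1{\mathcal I}\sum_{i=1}^{\mathcal I}\mathbf a_i$. Then there exists an optimal solution $(\bar{\mathbf a}^\star,\mathbf s^\star)$ of (SMOP2). For $\kappa\in(0,1)$ this solution $(\bar{\mathbf a}^\star,\mathbf s^\star)$ is unique. Furthermore, for $\kappa=0$ the optimal value $h(\mathbf s^\star)=\|\mathbf s^\star\|_2^2$ is unique, and for $\kappa=1$ the optimal value $g(\bar{\mathbf a}^\star)=\|\bar{\mathbf a}^\star-\bar\zeta\|_2^2$ is unique; in particular, $\mathbf s^\star$ is unique for $\kappa=0$ and $\bar{\mathbf a}^\star$ is unique for $\kappa=1$.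
   Context: Setting (a network of $\mathcal I\in\mathbb N$ residential energy systems with batteries). Fix an integer horizon $N\ge 2$, a time $k\in\mathbb N_0$, a step length $T>0$, and write $[m:n]=\{m,m+1,\dots,n\}$. For each $i\in[1:\mathcal I]$ the following are given: constants $\alpha_i,\beta_i,\gamma_i\in(0,1]$, a capacity $C_i\ge0$, bounds $\underline u_i<0<\bar u_i$, an initial state $x_i(k)\in[0,C_i]$, and data $w_i(n)\in\mathbb R$ for $n\in[k:k+N-1]$. Let $\mathbb U_i$ be the set of $(u^-,u^+)\in\mathbb R^2$ with $\underline u_i\le u^-\le0$, $0\le u^+\le\bar u_i$ and $0\le u^-/\underline u_i+u^+/\bar u_i\le1$. Let $\mathbb D_i\subset\mathbb R^N$ be the set of vectors $\mathbf z_i=(z_i(k),\dots,z_i(k+N-1))^\top$ for which there exist $(u_i^-(n),u_i^+(n))\in\mathbb U_i$, $n\in[k:k+N-1]$, such that $x_i(n+1)=\alpha_i x_i(n)+T(\beta_iu_i^+(n)+u_i^-(n))\in[0,C_i]$ and $z_i(n)=w_i(n)+u_i^+(n)+\gamma_iu_i^-(n)$ for all $n\in[k:k+N-1]$. A reference vector $\bar\zeta\in\mathbb R^N$ and tube bounds $\underline{\mathbf c},\bar{\mathbf c}\in\mathbb R^N$ are given. Define $$\mathbb S=\Big\{(\bar{\mathbf z},\mathbf s)\in\mathbb R^N\times\mathbb R^{2N}_{\ge0}:\ \begin{pmatrix}I\\-I\end{pmatrix}\bar{\mathbf z}-\mathbf s\le\begin{pmatrix}\bar{\mathbf c}\\-\underline{\mathbf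 c}\end{pmatrix}\Big\}$$ (componentwise inequality, $I$ the $N\times N$ identity). The variables are $\mathbf a=(\mathbf a_1^\top,\dots,\mathbf a_{\mathcal I}^\top)^\top\in\mathbb R^{\mathcal IN}$ with $\mathbf a_i\in\mathbb R^N$, $\mathbf s\in\mathbb R^{2N}_{\ge0}$, and $\mathbf z_i\in\mathbb R^N$. *)

From HB Require Import structures.
From mathcomp Require Import all_boot all_order all_algebra.
From mathcomp Require Import reals.
Set Implicit Arguments. Unset Strict Implicit. Unset Printing Implicit Defensive.
Import Order.TTheory GRing.Theory Num.Theory.
Local Open Scope ring_scope.

Section Defs.
Variable R : realType.

Definition sqnorm (m : nat) (v : 'cV[R]_m) : R := \sum_(j < m) (v j 0) ^+ 2.

Definition inU (ulo uhi um up : R) : Prop :=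
  [/\ ulo <= um <= 0, 0 <= up <= uhi & 0 <= um / ulo + up / uhi <= 1].

(* z \in D_i : there exist inputs u^-, u^+ (indexed by absolute time n) and a
   state trajectory x (x k = initial state x_i(k)) such that for all
   n in [k : k+N-1]: (u^-(n),u^+(n)) \in U_i,
   x(n+1) = alpha x(n) + T (beta u^+(n) + u^-(n)) \in [0, C], and
   z(n) = w(n) + u^+(n) + gamma u^-(n); entry j of z is z(k+j). *)
Definition inD (N k : nat) (T alpha beta gamma C ulo uhi x0 : R)
    (w : nat -> R) (z : 'cV[R]_N) : Prop :=
  exists (um up x : nat -> R),
    x k = x0 /\
    (forall n, (k <= n < k + N)%N ->
       [/\ inU ulo uhi (um n) (up n),
           x n.+1 = alpha * x n + T * (beta * up n + um n)
         & 0 <= x n.+1 <= C]) /\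
    (forall j : 'I_N, z j 0 = w (k + j)%N + up (k + j)%N + gamma * um (k + j)%N).

Definition inS (N : nat) (clo cup : 'cV[R]_N) (zb : 'cV[R]_N) (s : 'cV[R]_(N + N))
    : Prop :=
  (forall j, 0 <= s j 0) /\
  (forall j, ((col_mx 1%:M (- 1%:M)) *m zb - s) j 0 <= (col_mx cup (- clo)) j 0).

Definition abar (I N : nat) (a : 'I_I -> 'cV[R]_N) : 'cV[R]_N :=
  (I%:R)^-1 *: \sum_(i < I) a i.

Definition fobj (N : nat) (kappa : R) (zeta ab : 'cV[R]_N) (s : 'cV[R]_(N + N)) : R :=
  kappa * sqnorm (ab - zeta) + (1 - kappa) * sqnorm s.

End Defs.

(* Uniqueness: feasibility is preserved under midpoints, and by the
   parallelogram identity the objective at the midpoint of two feasible points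
   is the mean of their values minus
   (kappa |abar a - abar a'|^2 + (1 - kappa) |s - s'|^2) / 4.
   Two minimisers therefore agree in every component with a positive weight.
   Existence: for a fixed average the best slack is the positive part of the
   violation of the tube, and with this slack the objective becomes a continuous
   function of the battery inputs.  The admissible inputs form a compact set, so
   the objective attains its minimum there (Weierstrass), and every feasible
   point is dominated by the admissible inputs that realise it. *)

From HB Require Import structures.
From mathcomp Require Import all_boot all_order all_algebra.
From mathcomp Require Import reals.
From mathcomp Require Import all_classical all_analysis.
From mathcomp Require Import ring lra zify.
Set Implicit Arguments. Unset Strict Implicit. Unset Printing Implicit Defensive.
Import Order.TTheory GRing.Theory Num.Theory.
Import numFieldNormedType.Exports.
Local Open Scope classical_set_scope.
Local Open Scope ring_scope.

Section SquaredNorm.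
Variables (R : realType) (m : nat).
Implicit Types u v : 'cV[R]_m.

Lemma sqnorm_ge0 v : 0 <= sqnorm v.
Proof. by apply: sumr_ge0 => j _; exact: sqr_ge0. Qed.

Lemma sqnorm_eq0 v : sqnorm v = 0 -> v = 0.
Proof.
move=> /eqP; rewrite psumr_eq0 => [/allP v0|j _]; last exact: sqr_ge0.
apply/matrixP => i j; rewrite (ord1 j) mxE.
by have /= := v0 i (mem_index_enum _); rewrite sqrf_eq0 => /eqP.
Qed.

Lemma sqnorm_midpoint u v :
  sqnorm (2^-1 *: (u + v)) = (sqnorm u + sqnorm v) / 2 - sqnorm (u - v) / 4.
Proof.
rewrite /sqnorm -big_split /= !mulr_suml -sumrB; apply: eq_bigr => j _.
by rewrite !mxE; field.
Qed.

Lemma sqnorm_col_mx u v : sqnorm (col_mx u v) = sqnorm u + sqnorm v.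
Proof.
by rewrite /sqnorm big_split_ord; congr (_ + _); apply: eq_bigr => j _;
  rewrite ?col_mxEu ?col_mxEd.
Qed.

Lemma ler_sqnorm u v : (forall j, 0 <= u j 0 <= v j 0) -> sqnorm u <= sqnorm v.
Proof.
move=> uv; apply: ler_sum => j _; have /andP[? ?] := uv j.
by rewrite !expr2 ler_pM.
Qed.

End SquaredNorm.

Section Midpoints.
Variable R : realType.

Lemma inU_midpoint (ulo uhi a b a' b' : R) :
  inU ulo uhi a b -> inU ulo uhi a' b' ->
  inU ulo uhi ((a + a') / 2) ((b + b') / 2).
Proof.
move=> [/andP[? ?] /andP[? ?] /andP[? ?]] [/andP[? ?] /andP[? ?] /andP[? ?]].
rewrite /inU.
have -> : (a + a') / 2 / ulo + (b + b') / 2 / uhi =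
          ((a / ulo + b / uhi) + (a' / ulo + b' / uhi)) / 2 by ring.
by split; apply/andP; split; lra.
Qed.

Lemma inD_midpoint N k (T alpha beta gamma C ulo uhi x0 : R) w (z z' : 'cV[R]_N) :
  inD k T alpha beta gamma C ulo uhi x0 w z ->
  inD k T alpha beta gamma C ulo uhi x0 w z' ->
  inD k T alpha beta gamma C ulo uhi x0 w (2^-1 *: (z + z')).
Proof.
move=> [um [up [x [x_k [dyn out]]]]] [um' [up' [x' [x'_k [dyn' out']]]]].
exists (fun n => (um n + um' n) / 2), (fun n => (up n + up' n) / 2),
  (fun n => (x n + x' n) / 2); split; first by rewrite x_k x'_k; field.
split=> [n kn|j]; last by rewrite !mxE out out'; field.
have [? x_next /andP[? ?]] := dyn n kn; have [? x'_next /andP[? ?]] := dyn' n kn.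
split; first exact: inU_midpoint.
  by rewrite x_next x'_next; field.
by apply/andP; split; lra.
Qed.

Lemma inS_midpoint N (clo cup zb zb' : 'cV[R]_N) (s s' : 'cV[R]_(N + N)) :
  inS clo cup zb s -> inS clo cup zb' s' ->
  inS clo cup (2^-1 *: (zb + zb')) (2^-1 *: (s + s')).
Proof.
move=> [s0 le_s] [s'0 le_s']; split=> j.
  by rewrite !mxE; have := s0 j; have := s'0 j; lra.
set M := col_mx _ _.
have -> : M *m (2^-1 *: (zb + zb')) - 2^-1 *: (s + s') =
          2^-1 *: ((M *m zb - s) + (M *m zb' - s')).
  by rewrite -scalemxAr mulmxDr -scalerBr addrACA opprD.
by rewrite mxE [X in 2^-1 * X]mxE; have := le_s j; have := le_s' j; lra.
Qed.

Lemma abar_midpoint I N (a a' : 'I_I -> 'cV[R]_N) :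
  abar (fun i => 2^-1 *: (a i + a' i)) = 2^-1 *: (abar a + abar a').
Proof. by rewrite /abar -scaler_sumr big_split -scalerDr !scalerA mulrC. Qed.

Lemma fobj_midpoint N (kappa : R) (zeta ab ab' : 'cV[R]_N) (s s' : 'cV[R]_(N + N)) :
  fobj kappa zeta (2^-1 *: (ab + ab')) (2^-1 *: (s + s')) =
  (fobj kappa zeta ab s + fobj kappa zeta ab' s') / 2
  - (kappa * sqnorm (ab - ab') + (1 - kappa) * sqnorm (s - s')) / 4.
Proof.
rewrite /fobj.
have -> : 2^-1 *: (ab + ab') - zeta = 2^-1 *: ((ab - zeta) + (ab' - zeta)).
  by apply/matrixP => i j; rewrite !mxE; field.
have dab : (ab - zeta) - (ab' - zeta) = ab - ab' by rewrite opprB addrA subrK.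
by rewrite !sqnorm_midpoint dab; ring.
Qed.

End Midpoints.

Section TubeSlack.
Variables (R : realType) (N : nat) (clo cup zb : 'cV[R]_N).

Lemma inS_col_mx (s1 s2 : 'cV[R]_N) :
  inS clo cup zb (col_mx s1 s2) <->
  forall j, [/\ 0 <= s1 j 0, 0 <= s2 j 0,
                zb j 0 - cup j 0 <= s1 j 0 & clo j 0 - zb j 0 <= s2 j 0].
Proof.
rewrite /inS.
have -> : col_mx 1%:M (- 1%:M) *m zb - col_mx s1 s2 = col_mx (zb - s1) (- zb - s2).
  by rewrite mul_col_mx mul1mx mulNmx mul1mx opp_col_mx add_col_mx.
split=> [[s0 le_s] j|H].
  have := s0 (lshift N j); have := s0 (rshift N j).
  have := le_s (lshift N j); have := le_s (rshift N j).
  by rewrite !col_mxEu !col_mxEd !mxE; split; lra.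
split=> l; rewrite -[l]splitK; case: (fintype.split l) => j /=;
  have [? ? ? ?] := H j; rewrite ?col_mxEu ?col_mxEd ?mxE; lra.
Qed.

Definition tube_slack : 'cV[R]_(N + N) :=
  col_mx (map_mx (Num.max^~ 0) (zb - cup)) (map_mx (Num.max^~ 0) (clo - zb)).

Lemma tube_slack_inS : inS clo cup zb tube_slack.
Proof.
by apply/inS_col_mx => j; rewrite !mxE !le_max !lexx !orbT.
Qed.

Lemma sqnorm_tube_slack_le s : inS clo cup zb s -> sqnorm tube_slack <= sqnorm s.
Proof.
have max0_le (t u : R) : 0 <= u -> t <= u -> 0 <= Num.max t 0 <= u.
  by move=> u0 tu; rewrite le_max lexx orbT ge_max tu u0.
rewrite -(vsubmxK s) => /inS_col_mx H; rewrite !sqnorm_col_mx.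
by apply: lerD; apply: ler_sqnorm => j; have := H j; rewrite !mxE => -[? ? ? ?];
  exact: max0_le.
Qed.

End TubeSlack.

Section RealContinuity.
Variables (R : realType) (V : topologicalType).
Implicit Types f g : V -> R.

Lemma continuous_cst (c : R) : continuous (fun _ : V => c).
Proof. by move=> p; exact: cvg_cst. Qed.

Lemma continuous_add f g :
  continuous f -> continuous g -> continuous (fun p => f p + g p).
Proof. by move=> cf cg p; exact: (continuousD (cf p) (cg p)). Qed.

Lemma continuous_opp f : continuous f -> continuous (fun p => - f p).
Proof. by move=> cf p; exact: (continuousN (cf p)). Qed.

Lemma continuous_mul f g :
  continuous f -> continuous g -> continuous (fun p => f p * g p).
Proof. by move=> cf cg p; exact: (continuousM (cf p) (cg p)). Qed.

Lemma continuous_sum (J : finType) (f : J -> V -> R) :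
  (forall j, continuous (f j)) -> continuous (fun p => \sum_j f j p).
Proof.
move=> cf; rewrite -fct_sumE.
elim/big_ind: _ => // [|g h cg ch p]; first exact: continuous_cst.
exact: (cvgD (cg p) (ch p)).
Qed.

Lemma continuous_max0 f : continuous f -> continuous (fun p => Num.max (f p) 0).
Proof. by move=> cf p; apply: continuous_max (cf p) _; exact: cvg_cst. Qed.

Lemma continuous_sqnorm m (v : V -> 'cV[R]_m) :
  (forall j, continuous (fun p => v p j 0)) -> continuous (fun p => sqnorm (v p)).
Proof. by move=> cv; apply: continuous_sum => j; exact: continuous_mul. Qed.

Lemma closed_le f g : continuous f -> continuous g -> closed [set p | f p <= g p].
Proof.
move=> cf cg.
have -> : [set p | f p <= g p] = (fun p => g p - f p) @^-1` [set x | 0 <= x].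
  by apply/seteqP; split=> p /=; rewrite subr_ge0.
apply: preimage_closed (@closed_ge _ 0) => p _.
exact: (cvgB (cg p) (cf p)).
Qed.

End RealContinuity.

Section SMOP.
Variables (R : realType) (I N k : nat) (T : R).
Variables (alpha beta gamma C ulo uhi x0 : 'I_I -> R) (w : 'I_I -> nat -> R).
Variables (zeta clo cup : 'cV[R]_N) (kappa : R).

Definition feasible (a : 'I_I -> 'cV[R]_N) (s : 'cV[R]_(N + N)) : Prop :=
  (exists z : 'I_I -> 'cV[R]_N, forall i, z i - a i = 0 /\
      inD k T (alpha i) (beta i) (gamma i) (C i) (ulo i) (uhi i) (x0 i) (w i) (z i))
  /\ inS clo cup (abar a) s.

Definition optimal a s : Prop :=
  feasible a s /\
  forall a' s', feasible a' s' ->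
    fobj kappa zeta (abar a) s <= fobj kappa zeta (abar a') s'.

Lemma feasible_midpoint a s a' s' : feasible a s -> feasible a' s' ->
  feasible (fun i => 2^-1 *: (a i + a' i)) (2^-1 *: (s + s')).
Proof.
move=> [[z Hz] inS_s] [[z' Hz'] inS_s'].
split; last by rewrite abar_midpoint; exact: inS_midpoint.
exists (fun i => 2^-1 *: (z i + z' i)) => i.
have [/subr0_eq -> inD_z] := Hz i; have [/subr0_eq -> inD_z'] := Hz' i.
by split; [rewrite subrr | exact: inD_midpoint].
Qed.

Hypothesis kappa01 : 0 <= kappa <= 1.

Lemma optimal_unique a s a' s' : optimal a s -> optimal a' s' ->
  (0 < kappa -> abar a = abar a') /\ (kappa < 1 -> s = s').
Proof.
move=> [feas opt] [feas' opt'].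
have le_mid := opt _ _ (feasible_midpoint feas feas').
rewrite abar_midpoint fobj_midpoint in le_mid.
have le_ab := opt _ _ feas'; have le_ba := opt' _ _ feas.
have da0 := sqnorm_ge0 (abar a - abar a'); have ds0 := sqnorm_ge0 (s - s').
have /andP[k0 k1] := kappa01.
have gap0 (c : R) m (u v : 'cV[R]_m) : 0 < c -> c * sqnorm (u - v) = 0 -> u = v.
  by move=> c0 /eqP; rewrite mulf_eq0 gt_eqF //= => /eqP/sqnorm_eq0/subr0_eq.
split=> [k_gt0|k_lt1]; first by apply: (gap0 kappa) => //; nra.
by apply: (gap0 (1 - kappa)); rewrite ?subr_gt0 //; nra.
Qed.

(* An input vector lists, for every household [i] and every step [j] of the
   horizon, the discharge [uminus p i j] and the charge [uplus p i j]. *)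
Local Notation inputs := 'rV[R]_(I * (N + N)).

Definition uminus (p : inputs) i (j : 'I_N) : R := p ord0 (mxvec_index i (lshift N j)).
Definition uplus (p : inputs) i (j : 'I_N) : R := p ord0 (mxvec_index i (rshift N j)).

(* [u] read at absolute time [n]; junk value 0 outside [k, k + N). *)
Definition at_time (u : 'I_N -> R) (n : nat) : R := oapp u 0 (insub (n - k)%N).

Lemma at_time_shift u (j : 'I_N) : at_time u (k + j) = u j.
Proof. by rewrite /at_time addKn valK. Qed.

Fixpoint state (p : inputs) i (j : nat) : R :=
  if j is j'.+1 then
    alpha i * state p i j' +
    T * (beta i * at_time (uplus p i) (k + j') + at_time (uminus p i) (k + j'))
  else x0 i.

Definition output (p : inputs) i : 'cV[R]_N :=
  \col_j (w i (k + j)%N + uplus p i j + gamma i * uminus p i j).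

Definition admissible (p : inputs) : Prop :=
  forall i (j : 'I_N),
    inU (ulo i) (uhi i) (uminus p i j) (uplus p i j) /\ 0 <= state p i j.+1 <= C i.

Definition objective (p : inputs) : R :=
  fobj kappa zeta (abar (output p)) (tube_slack clo cup (abar (output p))).

Lemma output_inD p i : admissible p ->
  inD k T (alpha i) (beta i) (gamma i) (C i) (ulo i) (uhi i) (x0 i) (w i) (output p i).
Proof.
move=> adm_p; exists (at_time (uminus p i)), (at_time (uplus p i)),
  (fun n => state p i (n - k)); split; first by rewrite subnn.
split=> [n /andP[kn nkN]|j]; last by rewrite mxE !at_time_shift.
have [j ->] : exists j : 'I_N, n = (k + j)%N.
  have nkN' : (n - k < N)%N by lia.
  by exists (Ordinal nkN'); rewrite /= subnKC.
rewrite -addnS !addKn !at_time_shift; have [? ?] := adm_p i j.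
by split=> //=; rewrite !at_time_shift.
Qed.

Lemma inD_output (z : 'I_I -> 'cV[R]_N) :
  (forall i,
     inD k T (alpha i) (beta i) (gamma i) (C i) (ulo i) (uhi i) (x0 i) (w i) (z i)) ->
  exists2 p, admissible p & output p = z.
Proof.
move=> /choice[um] /choice[up] /choice[x] traj.
pose p : inputs := mxvec (row_mx (\matrix_(i, j) um i (k + j)%N)
                                 (\matrix_(i, j) up i (k + j)%N)).
have um_p i j : uminus p i j = um i (k + j)%N by rewrite /uminus mxvecE row_mxEl mxE.
have up_p i j : uplus p i j = up i (k + j)%N by rewrite /uplus mxvecE row_mxEr mxE.
have step i (j : 'I_N) := proj1 (proj2 (traj i)) (k + j)%N.
have kj_in (j : nat) : (j < N)%N -> (k <= k + j < k + N)%N.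
  by move=> jN; rewrite leq_addr ltn_add2l.
have state_p i j : (j <= N)%N -> state p i j = x i (k + j)%N.
  elim: j => [|j IH] jN /=; first by rewrite addn0 (proj1 (traj i)).
  rewrite addnS; have [_ -> _] := step i (Ordinal jN) (kj_in _ jN).
  rewrite IH 1?ltnW // (at_time_shift (uplus p i) (Ordinal jN)).
  by rewrite (at_time_shift (uminus p i) (Ordinal jN)) um_p up_p.
exists p => [i j|].
  have [? _ ?] := step i j (kj_in _ (ltn_ord j)).
  by rewrite um_p up_p state_p // addnS.
apply: funext => i; apply/matrixP => j j0.
by rewrite (ord1 j0) mxE um_p up_p (proj2 (proj2 (traj i))).
Qed.

Lemma continuous_uminus i j : continuous (fun p : inputs => uminus p i j).
Proof. by move=> p; exact: coord_continuous. Qed.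

Lemma continuous_uplus i j : continuous (fun p : inputs => uplus p i j).
Proof. by move=> p; exact: coord_continuous. Qed.

Lemma continuous_at_time (u : inputs -> 'I_N -> R) n :
  (forall j, continuous (fun p => u p j)) -> continuous (fun p => at_time (u p) n).
Proof.
by move=> cu; rewrite /at_time; case: insub => [j|]; [exact: cu | exact: continuous_cst].
Qed.

Lemma continuous_state i j : continuous (fun p : inputs => state p i j).
Proof.
elim: j => [|j IH] /=; first exact: continuous_cst.
apply: continuous_add; apply: continuous_mul => //; try exact: continuous_cst.
apply: continuous_add; last by apply: continuous_at_time; exact: continuous_uminus.
apply: continuous_mul; first exact: continuous_cst.
by apply: continuous_at_time; exact: continuous_uplus.
Qed.

Lemma continuous_abar_output j : continuous (fun p : inputs => abar (output p) j 0).
Proof.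
have -> : (fun p => abar (output p) j 0) = (fun p => I%:R^-1 *
    \sum_i (w i (k + j)%N + uplus p i j + gamma i * uminus p i j)).
  apply: funext => p; rewrite /abar mxE summxE; congr (_ * _).
  by apply: eq_bigr => i _; rewrite mxE.
apply: continuous_mul; first exact: continuous_cst.
apply: continuous_sum => i; apply: continuous_add.
  by apply: continuous_add; [exact: continuous_cst | exact: continuous_uplus].
by apply: continuous_mul; [exact: continuous_cst | exact: continuous_uminus].
Qed.

Lemma continuous_objective : continuous objective.
Proof.
have cab := continuous_abar_output.
apply: continuous_add; apply: continuous_mul; try exact: continuous_cst.
  apply: continuous_sqnorm => j; under eq_fun do rewrite mxE.
  by apply: continuous_add; [exact: cab | exact: continuous_cst].
under eq_fun do rewrite sqnorm_col_mx.
apply: continuous_add; apply: continuous_sqnorm => j.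
  under eq_fun do rewrite 2!mxE.
  by apply: continuous_max0; apply: continuous_add; [exact: cab | exact: continuous_cst].
under eq_fun do rewrite 3!mxE.
apply: continuous_max0; apply: continuous_add; first exact: continuous_cst.
by apply: continuous_opp; exact: cab.
Qed.

Lemma closed_admissible : closed admissible.
Proof.
move=> p adm_cl_p i j.
have lim (f g : inputs -> R) : continuous f -> continuous g ->
    (forall q, admissible q -> f q <= g q) -> f p <= g p.
  by move=> cf cg fg; exact: (closed_le cf cg) p (closureS fg adm_cl_p).
have cu := @continuous_uminus i j; have cp := @continuous_uplus i j.
have cx := @continuous_state i j.+1.
have cr : continuous (fun q : inputs => uminus q i j / ulo i + uplus q i j / uhi i).
  by apply: continuous_add; apply: continuous_mul => //; exact: continuous_cst.
have cc (c : R) := @continuous_cst R inputs c.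
split; [split|]; apply/andP; split;
  [ apply: (lim _ _ (cc _) cu) | apply: (lim _ _ cu (cc _))
  | apply: (lim _ _ (cc _) cp) | apply: (lim _ _ cp (cc _))
  | apply: (lim _ _ (cc _) cr) | apply: (lim _ _ cr (cc _))
  | apply: (lim _ _ (cc _) cx) | apply: (lim _ _ cx (cc _)) ];
  by move=> q /(_ i j) [[/andP[? ?] /andP[? ?] /andP[? ?]] /andP[? ?]].
Qed.

Hypothesis ulo_le0_le_uhi : forall i, ulo i <= 0 <= uhi i.

Lemma compact_admissible : compact admissible.
Proof.
pose M := \sum_i (uhi i - ulo i).
have M_ge i : uhi i - ulo i <= M.
  rewrite /M (bigD1 i) //= lerDl sumr_ge0 // => i' _.
  by have /andP[? ?] := ulo_le0_le_uhi i'; lra.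
have box := @rV_compact R (I * (N + N)) (fun _ => `[- M, M]%classic)
  (fun _ => @segment_compact R (- M) M).
apply: (subclosed_compact closed_admissible box) => p adm_p l /=.
case/mxvec_indexP: l => i j; rewrite in_itv /=.
have := M_ge i; have /andP[? ?] := ulo_le0_le_uhi i.
rewrite -[j]splitK; case: (fintype.split j) => {}j /=;
  have [[/andP[? ?] /andP[? ?] _] _] := adm_p i j => ?.
  by rewrite -/(uminus p i j); apply/andP; split; lra.
by rewrite -/(uplus p i j); apply/andP; split; lra.
Qed.

Hypothesis alpha01 : forall i, 0 <= alpha i <= 1.
Hypothesis x0_in : forall i, 0 <= x0 i <= C i.

Lemma admissible0 : admissible 0.
Proof.
have at_time0 (u : 'I_N -> R) n : (forall j, u j = 0) -> at_time u n = 0.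
  by move=> u0; rewrite /at_time; case: insub => //= j.
have um0 i j : uminus 0 i j = 0 by rewrite /uminus mxE.
have up0 i j : uplus 0 i j = 0 by rewrite /uplus mxE.
have state0 i j : 0 <= state 0 i j <= C i.
  elim: j => [|j IH] /=; first exact: x0_in.
  rewrite !at_time0 ?mulr0 ?addr0 //.
  by have /andP[? ?] := alpha01 i; have /andP[? ?] := IH; apply/andP; split; nra.
move=> i j; split; last exact: state0.
have /andP[? ?] := ulo_le0_le_uhi i.
by rewrite /inU um0 up0 !mul0r addr0 lexx ler01; split; apply/andP; split.
Qed.

Theorem exists_optimal : exists a s, optimal a s.
Proof.
have [c adm_c c_min] := compact_EVT_min (ex_intro _ 0 admissible0) compact_admissible
  (continuous_subspaceT continuous_objective).
rewrite inE in adm_c.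
exists (output c), (tube_slack clo cup (abar (output c))); split.
  split; last exact: tube_slack_inS.
  by exists (output c) => i; rewrite subrr; split; last exact: output_inD.
move=> a' s' [[z' out_z'] inS_s'].
have a'E : a' = z' by apply: funext => i; have [/subr0_eq] := out_z' i.
subst a'; have [p' adm_p' out_p'] := inD_output (fun i => proj2 (out_z' i)).
subst z'; apply: le_trans (c_min p' _) _; first by rewrite inE.
have /andP[_ k1] := kappa01.
rewrite /objective /fobj lerD2l ler_wpM2l ?subr_ge0 //.
exact: sqnorm_tube_slack_le.
Qed.

End SMOP.

Theorem proposition1 (R : realType) (I N k : nat) (T : R)
  (alpha beta gamma C ulo uhi x0 : 'I_I -> R) (w : 'I_I -> nat -> R)
  (zeta clo cup : 'cV[R]_N) (kappa : R) :
  (0 < I)%N -> (2 <= N)%N -> 0 < T ->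
  (forall i, 0 < alpha i <= 1) -> (forall i, 0 < beta i <= 1) ->
  (forall i, 0 < gamma i <= 1) -> (forall i, 0 <= C i) ->
  (forall i, ulo i < 0 < uhi i) -> (forall i, 0 <= x0 i <= C i) ->
  0 <= kappa <= 1 ->
  let feasible (a : 'I_I -> 'cV[R]_N) (s : 'cV[R]_(N + N)) : Prop :=
    (exists z : 'I_I -> 'cV[R]_N, forall i, z i - a i = 0 /\
        inD k T (alpha i) (beta i) (gamma i) (C i) (ulo i) (uhi i) (x0 i) (w i) (z i))
    /\ inS clo cup (abar a) s in
  let optimal a s : Prop :=
    feasible a s /\
    forall a' s', feasible a' s' ->
      fobj kappa zeta (abar a) s <= fobj kappa zeta (abar a') s' in
  (exists a s, optimal a s) /\
  (0 < kappa < 1 -> forall a s a' s', optimal a s -> optimal a' s' ->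
     abar a = abar a' /\ s = s') /\
  (kappa = 0 -> forall a s a' s', optimal a s -> optimal a' s' ->
     sqnorm s = sqnorm s' /\ s = s') /\
  (kappa = 1 -> forall a s a' s', optimal a s -> optimal a' s' ->
     sqnorm (abar a - zeta) = sqnorm (abar a' - zeta) /\ abar a = abar a').
Proof.
move=> _ _ _ alpha_in _ _ _ u_bounds x0_in kappa01 feasible optimal.
have alpha01 i : 0 <= alpha i <= 1 by case/andP: (alpha_in i) => /ltW -> ->.
have ulo_le0_le_uhi i : ulo i <= 0 <= uhi i.
  by case/andP: (u_bounds i) => /ltW -> /ltW ->.
have unique a s a' s' : optimal a s -> optimal a' s' ->
    (0 < kappa -> abar a = abar a') /\ (kappa < 1 -> s = s').
  exact: optimal_unique.
split; first exact: exists_optimal.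
split=> [/andP[k_gt0 k_lt1] a s a' s' opt opt'|].
  by have [ea es] := unique a s a' s' opt opt'; rewrite ea ?es.
split=> [k0 a s a' s' opt opt'|k1 a s a' s' opt opt'].
  by have [_ es] := unique a s a' s' opt opt'; rewrite es // k0 ltr01.
by have [ea _] := unique a s a' s' opt opt'; rewrite ea // k1 ltr01.
Qed.
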